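(* Let $T:X\to X$ be a map with $\mathcal F_T(n)=|\{x\in X: T^nx=x\}|<\infty$ for all $n\ge1$. Let $m\ge1$ have prime factorization $m=p_1^{a_1}\cdots p_r^{a_r}$, let $n\ge1$, and let $J=\mathcal D(m)\setminus\mathcal D(n)$, where $\mathcal D(k)$ denotes the set of prime divisors of $k$. Write $\boldsymbol p_J^{\boldsymbol a_J}=\prod_{p_j\in J}p_j^{a_j}$. Then \[ \mathcal O_{T^m}(n)=\sum_{d\mid \boldsymbol p_J^{\boldsymbol a_J}}\frac{m}{d}\,\mathcal O_T\!\left(\frac{mn}{d}\right), \] where $T^m$ is the $m$th iterate of $T$.
   Context: For a map $S:X\to X$, a closed orbit of length $n$ is a set $\{x,Sx,\dots,S^{n-1}x\}$ with $S^nx=x$ having exactly $n$ elements; $\mathcal O_S(n)$ denotes the number of closed orbits of length $n$ under $S$. *)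

From mathcomp Require Import all_boot.
From Stdlib Require Import List ClassicalEpsilon.

Set Implicit Arguments.
Unset Strict Implicit.
Unset Printing Implicit Defensive.

Definition fix_finite (X : Type) (S : X -> X) (n : nat) : Prop :=
  exists l : list X, forall x, iter n S x = x <-> In x l.

Definition orbit_list (X : Type) (S : X -> X) (n : nat) (x : X) : list X :=
  map (fun k => iter k S x) (iota 0 n).

Definition closed_orbit (X : Type) (S : X -> X) (n : nat) (A : X -> Prop) : Prop :=
  exists x : X,
    iter n S x = x /\
    A = (fun y => In y (orbit_list S n x)) /\
    NoDup (orbit_list S n x).

Definition has_card (X : Type) (P : (X -> Prop) -> Prop) (k : nat) : Prop :=
  exists l : list (X -> Prop),
    NoDup l /\ (forall A, P A <-> In A l) /\ length l = k.

(* O_S(n): the number of closed orbits of length n under S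
   (chosen classically; well defined whenever this collection is finite). *)
Definition O_count (X : Type) (S : X -> X) (n : nat) : nat :=
  epsilon (inhabits 0%N) (fun k => has_card (closed_orbit S n) k).

Definition pJaJ (m n : nat) : nat :=
  \prod_(p <- primes m | ~~ (p %| n)) p ^ logn p m.

From Stdlib Require Import List ClassicalEpsilon.
From mathcomp Require Import all_boot boolp.

Set Implicit Arguments.
Unset Strict Implicit.
Unset Printing Implicit Defensive.

(* Every point fixed by T^(mn) has a least T-period L, and its least T^m-period
   is L / gcd(L, m).  The points of least period k of a map S are exactly the
   points of its closed orbits of length k, so there are k * O_S(k) of them.
   Counting the T^(mn)-fixed points of least T^m-period n thus gives
   n * O_{T^m}(n) as a sum of L * O_T(L) over the L with L / gcd(L, m) = n, and
   these L are exactly the numbers mn/d with d dividing the pi(n)'-part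
   p_J^{a_J} of m. *)

Lemma InP (T : eqType) (x : T) (s : seq T) : reflect (In x s) (x \in s).
Proof.
elim: s => [|a s IH] /=; first by constructor.
by rewrite inE; apply: (iffP orP) => [[/eqP->|/IH]|[->|/IH]]; auto.
Qed.

Lemma NoDupP (T : eqType) (s : seq T) : reflect (NoDup s) (uniq s).
Proof.
elim: s => [|a s IH] /=; first by left; apply: NoDup_nil.
apply: (iffP andP) => [[a_s /IH s_nd]|/NoDup_cons_iff[a_s /IH s_nd]].
  by apply: NoDup_cons => // /InP; apply/negP.
by split=> //; apply/negP => /InP.
Qed.

Lemma length_size (T : Type) (s : seq T) : length s = size s.
Proof. by elim: s => //= x s ->. Qed.

Lemma count_sum (T : Type) (a : pred T) (s : seq T) :
  count a s = \sum_(x <- s) a x.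
Proof. by rewrite -sum1_count big_mkcond. Qed.

Lemma size_uniform_fibers (T U : eqType) (f : T -> U) (s : seq T) c :
  (forall x, x \in s -> count (fun y => f y == f x) s = c) ->
  size s = c * size (undup (map f s)).
Proof.
move=> fiber_c.
have -> : size s = \sum_(u <- undup (map f s)) count (fun y => f y == u) s.
  rewrite (eq_bigr _ (fun u _ => count_sum _ s)) exchange_big /=.
  rewrite -(count_predT s) count_sum; apply: eq_big_seq => x xs.
  rewrite -count_sum (eq_count (a2 := pred1 (f x))) => [|u]; last by rewrite /= eq_sym.
  by rewrite count_uniq_mem ?undup_uniq // mem_undup map_f.
rewrite -sum1_size mulnC big_distrl /=; apply: eq_big_seq => u.
by rewrite mem_undup mul1n => /mapP[x xs ->]; apply: fiber_c.
Qed.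

Lemma count_mem_subset (T : eqType) (s E : seq T) :
  uniq s -> uniq E -> {subset s <= E} -> count (mem s) E = size s.
Proof.
move=> s_uniq E_uniq sE; rewrite -size_filter; apply/perm_size/uniq_perm => //.
  exact: filter_uniq.
by move=> x; rewrite mem_filter andb_idr //; apply: sE.
Qed.

Lemma has_card_unique (X : Type) (P : (X -> Prop) -> Prop) a b :
  has_card P a -> has_card P b -> a = b.
Proof.
move=> [l1 [nd1 [P1 <-]]] [l2 [nd2 [P2 <-]]].
apply/eqP; rewrite eqn_leq; apply/andP; split; apply/leP.
- by apply: NoDup_incl_length => // A /P1 /P2.
- by apply: NoDup_incl_length => // A /P2 /P1.
Qed.

Lemma O_count_eq (X : Type) (S : X -> X) k c :
  has_card (closed_orbit S k) c -> O_count S k = c.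
Proof.
move=> Sc; apply: (has_card_unique _ Sc).
by apply: epsilon_spec; exists c.
Qed.

Section LeastPeriod.
Variables (X : Type) (S : X -> X).

Definition least_period (k : nat) (x : X) : Prop :=
  0 < k /\ iter k S x = x /\ forall j, 0 < j < k -> iter j S x <> x.

Lemma iter_comm i j x : iter i S (iter j S x) = iter j S (iter i S x).
Proof. by rewrite -!iterD addnC. Qed.

Lemma iter_periodM k q x : iter k S x = x -> iter (q * k) S x = x.
Proof. by move=> Sk; elim: q => //= q IH; rewrite mulSn iterD IH Sk. Qed.

Lemma iter_period_mod k j x : iter k S x = x -> iter j S x = iter (j %% k) S x.
Proof. by move=> Sk; rewrite {1}(divn_eq j k) addnC iterD iter_periodM. Qed.

Lemma iter_periodK k i x : 0 < k -> iter k S x = x ->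
  iter (k.-1 * i) S (iter i S x) = x.
Proof.
by move=> k_gt0 Sk; rewrite -iterD -mulSnr prednK // mulnC iter_periodM.
Qed.

Lemma least_period_fixP k x j :
  least_period k x -> (iter j S x = x <-> k %| j).
Proof.
move=> [k_gt0 [Sk k_min]]; split; last by move/dvdnP=> [q ->]; apply: iter_periodM.
rewrite (iter_period_mod _ Sk) => Sjx.
rewrite /dvdn; case: (posnP (j %% k)) => [//|jk_gt0].
by case: (k_min (j %% k)) => //; rewrite jk_gt0 ltn_mod.
Qed.

Lemma least_periodP k x :
  0 < k -> (forall j, iter j S x = x <-> k %| j) -> least_period k x.
Proof.
move=> k_gt0 fixP; split=> //; split; first exact/fixP.
by move=> j /andP[j_gt0 jk] /fixP /(dvdn_leq j_gt0); rewrite leqNgt jk.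
Qed.

Lemma least_period_unique k k' x :
  least_period k x -> least_period k' x -> k = k'.
Proof.
move=> per per'; apply/eqP; rewrite eqn_dvd; apply/andP; split.
- by apply/(least_period_fixP _ per); case: per' => _ [].
- by apply/(least_period_fixP _ per'); case: per => _ [].
Qed.

Lemma least_periodE k L x : least_period L x -> `[< least_period k x >] = (k == L).
Proof.
by move=> per; apply/asboolP/eqP => [per_k|->]; first exact: least_period_unique per.
Qed.

Lemma least_period_exists N x :
  0 < N -> iter N S x = x -> exists k, least_period k x.
Proof.
move=> N_gt0 SN.
have ex_fix : exists j, (0 < j) && `[< iter j S x = x >].
  by exists N; rewrite N_gt0 asboolT.
case: (ex_minnP ex_fix) => k /andP[k_gt0 /asboolP Sk] k_min.
exists k; split=> //; split=> // j /andP[j_gt0 jk] Sj.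
by have := k_min j; rewrite j_gt0 (asboolT Sj) leqNgt jk => /(_ isT).
Qed.

Lemma least_period_iter k x i : least_period k x -> least_period k (iter i S x).
Proof.
move=> per; have [k_gt0 [Sk _]] := per; apply: least_periodP => // j.
rewrite -(least_period_fixP _ per); split=> [Sj|Sj]; last by rewrite iter_comm Sj.
by rewrite -{2}(iter_periodK i k_gt0 Sk) -Sj iter_comm iter_periodK.
Qed.

End LeastPeriod.

Lemma coprime_divn_gcd L m : 0 < L -> coprime (L %/ gcdn L m) (m %/ gcdn L m).
Proof.
move=> L_gt0; have g_gt0 : 0 < gcdn L m by rewrite gcdn_gt0 L_gt0.
by rewrite /coprime -(eqn_pmul2r g_gt0) mul1n muln_gcdl !divnK ?dvdn_gcdl ?dvdn_gcdr.
Qed.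

Lemma least_period_iterM (X : Type) (S : X -> X) L m x : 0 < m ->
  least_period S L x -> least_period (iter m S) (L %/ gcdn L m) x.
Proof.
move=> m_gt0 per; have [L_gt0 _] := per.
set g := gcdn L m; have g_gt0 : 0 < g by rewrite gcdn_gt0 L_gt0.
apply: least_periodP => [|j]; first by rewrite divn_gt0 // dvdn_leq ?dvdn_gcdl.
rewrite -iterM (least_period_fixP _ per).
have {1}-> : L = L %/ g * g by rewrite divnK ?dvdn_gcdl.
have {1}-> : m = m %/ g * g by rewrite divnK ?dvdn_gcdr.
by rewrite mulnA dvdn_pmul2r // Gauss_dvdl // coprime_divn_gcd.
Qed.

Section ClosedOrbits.
Variables (X : Type) (S : X -> X) (k : nat).
Hypothesis k_gt0 : 0 < k.

(* [{classic X}] is [X] with classical decidable equality, so that points and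
   orbits can be collected in [seq]s and counted. *)
Definition orbit_set (x : {classic X}) : X -> Prop := fun y => In y (orbit_list S k x).

Lemma In_orbit_list x y :
  iter k S x = x -> In y (orbit_list S k x) <-> exists j, y = iter j S x.
Proof.
move=> Sk; rewrite in_map_iff; split=> [[j [<- _]]|[j ->]]; first by exists j.
exists (j %% k); split; first by rewrite -iter_period_mod.
by apply/InP; rewrite mem_iota ltn_mod k_gt0.
Qed.

Lemma orbit_list_uniq x :
  least_period S k x -> uniq (orbit_list S k x : seq {classic X}).
Proof.
move=> per; have [_ [_ k_min]] := per.
rewrite map_inj_in_uniq ?iota_uniq // => i j; rewrite !mem_iota /= !add0n => ik jk Sij.
wlog ij : i j ik jk Sij / i <= j.
  by move=> le_case; case: (leqP i j) => [|/ltnW] /le_case-> //.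
apply/eqP; rewrite eqn_leq ij leqNgt; apply/negP => lt_ij.
apply: (k_min (j - i)); first by rewrite subn_gt0 lt_ij (leq_ltn_trans (leq_subr i j) jk).
have : iter (j - i) S (iter i S x) = iter i S x by rewrite -iterD subnK // Sij.
by move/(least_period_fixP _ (least_period_iter i per))/(least_period_fixP _ per).
Qed.

Lemma closed_orbitE A :
  closed_orbit S k A <-> exists2 x, least_period S k x & A = orbit_set x.
Proof.
split=> [[x [Sk [-> /(@NoDupP {classic X}) orbit_uniq]]]|[x per ->]].
  exists x => //; split=> //; split=> // j /andP[j_gt0 jk] Sj.
  move: orbit_uniq; rewrite /orbit_list -(prednK k_gt0) /= => /andP[/negP[]].
  by rewrite -{1}Sj map_f // mem_iota j_gt0 add1n prednK.
have [_ [Sk _]] := per; exists x; split=> //; split=> //.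
exact/(@NoDupP {classic X})/orbit_list_uniq.
Qed.

Lemma orbit_set_eq x y : least_period S k x -> least_period S k y ->
  orbit_set x = orbit_set y <-> In x (orbit_list S k y).
Proof.
move=> [_ [Sx _]] [_ [Sy _]]; split=> [eq_xy|/(In_orbit_list _ Sy)[i ->]].
  by rewrite -[In _ _]/(orbit_set y x) -eq_xy; apply/(In_orbit_list _ Sx); exists 0.
have Syi : iter k S (iter i S y) = iter i S y by rewrite iter_comm Sy.
apply/predeqP => z; rewrite /orbit_set (In_orbit_list _ Syi) (In_orbit_list _ Sy).
split=> [[j ->]|[j ->]]; first by exists (j + i); rewrite iterD.
by exists (k.-1 * i + j); rewrite iterD iter_comm iter_periodK.
Qed.

Lemma has_card_closed_orbit (E : seq {classic X}) :
  (forall x, x \in E <-> least_period S k x) ->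
  has_card (closed_orbit S k) (size (undup (map orbit_set E))).
Proof.
move=> memE; exists (undup (map orbit_set E)); split; first exact/NoDupP/undup_uniq.
split; last exact: length_size.
move=> A; rewrite closed_orbitE; split=> [[x /memE xE ->]|/InP].
  by apply/InP; rewrite mem_undup map_f.
by rewrite mem_undup => /mapP[x /memE per ->]; exists x.
Qed.

Lemma count_least_period (U : seq {classic X}) :
  uniq U -> (forall x, least_period S k x -> x \in U) ->
  count (fun x => `[< least_period S k x >]) U = k * O_count S k.
Proof.
move=> U_uniq U_per.
pose E : seq {classic X} := filter (fun x => `[< least_period S k x >]) U.
have memE x : x \in E <-> least_period S k x.
  by rewrite mem_filter; split=> [/andP[/asboolP]|per] //; rewrite asboolT ?U_per.
rewrite -size_filter -/E (O_count_eq (has_card_closed_orbit memE)).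
apply: (@size_uniform_fibers _ _ orbit_set) => x /memE per_x.
have [_ [Sx _]] := per_x.
have orbit_sub : {subset (orbit_list S k x : seq {classic X}) <= E}.
  move=> y /InP /(In_orbit_list _ Sx)[i ->].
  exact/memE/least_period_iter.
transitivity (size (orbit_list S k x : seq {classic X}));
  last by rewrite size_map size_iota.
rewrite -(count_mem_subset (orbit_list_uniq per_x) (filter_uniq _ U_uniq) orbit_sub).
apply: eq_in_count => y /memE per_y /=.
by apply/eqP/InP => /(orbit_set_eq per_y per_x).
Qed.

End ClosedOrbits.

Lemma pJaJE m n : 0 < n -> pJaJ m n = m`_(\pi(n)^').
Proof.
move=> n_gt0; rewrite /pJaJ /partn -(filter_pi_of (ltnSn m)) big_filter_cond.
rewrite big_mkcond [RHS]big_mkcond; apply: eq_bigr => p _ /=.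
case: (boolP (p \in \pi(m))) => [pi_m_p|] /=.
  have p_pr : prime p by move: pi_m_p; rewrite mem_primes => /andP[].
  by rewrite !inE /= mem_primes p_pr n_gt0.
by rewrite -logn_gt0 lt0n negbK => /eqP->; rewrite if_same.
Qed.

Lemma pJaJ_gt0 m n : 0 < n -> 0 < pJaJ m n.
Proof. by move=> n_gt0; rewrite pJaJE ?part_gt0. Qed.

Lemma dvdn_pJaJ m n d : 0 < m -> 0 < n ->
  (d %| pJaJ m n) = (d %| m) && coprime n d.
Proof.
move=> m_gt0 n_gt0; rewrite pJaJE //; apply/idP/andP => [d_part|[d_m co_nd]].
  have d_gt0 : 0 < d by apply: dvdn_gt0 d_part; rewrite part_gt0.
  split; first exact: dvdn_trans d_part (dvdn_part _ _).
  by rewrite coprime_pi' // (pnat_dvd d_part (part_pnat _ _)).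
have d_gt0 : 0 < d := dvdn_gt0 m_gt0 d_m.
have d_pnat : (\pi(n)^').-nat d by rewrite -coprime_pi'.
by rewrite -(part_pnat_id d_pnat); apply: partn_dvd.
Qed.

Lemma divn_inj N d1 d2 : 0 < N -> d1 %| N -> d2 %| N -> N %/ d1 = N %/ d2 -> d1 = d2.
Proof.
move=> N_gt0 d1_N d2_N eq_div.
have q_gt0 : 0 < N %/ d1.
  by rewrite divn_gt0; [apply: dvdn_leq | apply: dvdn_gt0 d1_N].
by apply/eqP; rewrite -(eqn_pmul2l q_gt0) {2}eq_div !divnK.
Qed.

Lemma count_divisors_pJaJ m n L : 0 < m -> 0 < n -> 0 < L ->
  count (fun d => m * n %/ d == L) (divisors (pJaJ m n)) = (n == L %/ gcdn L m).
Proof.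
move=> m_gt0 n_gt0 L_gt0; have mn_gt0 : 0 < m * n by rewrite muln_gt0 m_gt0.
have memP d : (d \in divisors (pJaJ m n)) = (d %| m) && coprime n d.
  by rewrite -dvdn_divisors ?pJaJ_gt0 // dvdn_pJaJ.
have -> : count (fun d => m * n %/ d == L) (divisors (pJaJ m n)) =
    count (pred1 L) [seq m * n %/ d | d <- divisors (pJaJ m n)] by rewrite count_map.
rewrite count_uniq_mem; last first.
  rewrite map_inj_in_uniq ?divisors_uniq // => d1 d2.
  by rewrite !memP => /andP[d1_m _] /andP[d2_m _]; apply: divn_inj; rewrite ?dvdn_mulr.
congr (nat_of_bool _); apply/mapP/eqP => [[d] | n_eq].
  rewrite memP => /andP[/dvdnP[e m_ed] co_nd] ->.
  have [e_gt0 d_gt0] : 0 < e /\ 0 < d by apply/andP; rewrite -muln_gt0 -m_ed.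
  by rewrite m_ed mulnAC mulnK // -muln_gcdr (eqP co_nd) muln1 mulKn.
set g := gcdn L m; have g_gt0 : 0 < g by rewrite gcdn_gt0 L_gt0.
exists (m %/ g).
  by rewrite memP dvdn_div ?dvdn_gcdr //= n_eq coprime_divn_gcd.
have mg_gt0 : 0 < m %/ g by rewrite divn_gt0 //; apply: dvdn_leq (dvdn_gcdr L m).
by rewrite n_eq -{1}(divnK (dvdn_gcdr L m)) -mulnA mulKn // mulnC divnK ?dvdn_gcdl.
Qed.

Theorem theorem2p1 (X : Type) (T : X -> X)
  (hfin : forall k : nat, (1 <= k)%N -> fix_finite T k)
  (m n : nat) (hm : (1 <= m)%N) (hn : (1 <= n)%N) :
  O_count (iter m T) n =
  (\sum_(d <- divisors (pJaJ m n)) (m %/ d) * O_count T (m * n %/ d))%N.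
Proof.
have mn_gt0 : 0 < m * n by rewrite muln_gt0 hm.
have [U U_uniq memU] : exists2 U : seq {classic X},
    uniq U & forall x, x \in U <-> iter (m * n) T x = x.
  have [l fix_l] := hfin _ mn_gt0.
  exists (undup (l : seq {classic X})) => [|x]; first exact: undup_uniq.
  by rewrite mem_undup fix_l; exact: iff_sym (rwP (InP _ _)).
have count_Tm : count (fun x => `[< least_period (iter m T) n x >]) U =
    n * O_count (iter m T) n.
  apply: count_least_period U_uniq _ => // x [_ [Tmn _]].
  by apply/memU; rewrite mulnC iterM.
have count_T d : d \in divisors (pJaJ m n) ->
    n * (m %/ d * O_count T (m * n %/ d)) =
    count (fun x => `[< least_period T (m * n %/ d) x >]) U.
  rewrite -dvdn_divisors ?pJaJ_gt0 // dvdn_pJaJ // => /andP[d_m _].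
  have d_mn : d %| m * n := dvdn_mulr n d_m.
  have q_gt0 : 0 < m * n %/ d.
    by rewrite divn_gt0; [apply: dvdn_leq | apply: dvdn_gt0 d_mn].
  rewrite mulnA muln_divA // (mulnC n m) (count_least_period q_gt0 U_uniq) // => x per.
  by apply/memU/(least_period_fixP _ per)/dvdn_div.
apply/eqP; rewrite -(eqn_pmul2l hn) -count_Tm big_distrr /= (eq_big_seq _ count_T).
apply/eqP; rewrite count_sum (eq_bigr _ (fun d _ => count_sum _ U)) exchange_big /=.
apply: (@eq_big_seq _ _ _ {classic X}) => x /memU Tmn.
have [L per] := least_period_exists mn_gt0 Tmn; have [L_gt0 _] := per.
under eq_bigr do rewrite (least_periodE _ per).
rewrite (least_periodE _ (least_period_iterM hm per)) -count_sum.
by rewrite count_divisors_pJaJ.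
Qed.
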